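(* Let $\mathbb F$ be any field, $n\ge k>1$, let $\mathcal K\subseteq M_{n\times k}(\mathbb F)$ be a linear variety, let $B^*\subseteq[n]\times[k]$ be a cobasis of $\mathcal M(\mathcal K)$, let $1\le j'\le k$ be such that $B^*\cap([n]\times\{j'\})=\varnothing$, let $1\le i'\le n$ and $c_1,\dots,c_n\in\mathbb F$. Put $$\mathcal K'=\{X(i'|j') : X\in\mathcal K,\ X_{i\,j'}=c_i\text{ for all }1\le i\le n\}\subseteq M_{(n-1)\times(k-1)}(\mathbb F).$$ Then: (a) $\mathcal K'$ is a linear variety; (b) $\operatorname{codim}(\mathcal K')\le\operatorname{codim}(\mathcal K)-|B^*\cap(\{i'\}\times[k])|$; (c) if ${B'}^*$ is a cobasis of $\mathcal M(\mathcal K')$, then $\big(B^*\cap(\{i'\}\times[k])\big)\cup\iota({B'}^* )$ is a coindependent set of $\mathcal M(\mathcal K)$; (d) if $\det_{n,k}(X)=0$ for all $X\in\mathcal K$ and $c_i=\delta_{i\,i'}$ for all $i$, then $\det_{n-1,k-1}(X')=0$ for all $X'\in\mathcal K'$.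
   Context: $X(i'|j')$ denotes the matrix obtained from $X$ by deleting row $i'$ and column $j'$. The map $\iota=\iota^{(i',j')}:[n-1]\times[k-1]\to[n]\times[k]$ is $\iota(a,b)=(a',b')$ with $a'=a+1$ if $a\ge i'$ and $a'=a$ otherwise, $b'=b+1$ if $b\ge j'$ and $b'=b$ otherwise (it sends the position of an entry of $X(i'|j')$ to its position in $X$). A linear variety is a nonempty set $\mathbf s+V$ with $V$ a linear subspace (uniquely determined); codimension = ambient dimension minus $\dim V$ (ambient spaces $M_{n\times k}$ and $M_{(n-1)\times(k-1)}$ respectively). Identify $M_{n\times k}(\mathbb F)$ with $\mathbb F^{[n]\times[k]}$. Matroid $\mathcal M(\mathcal K)$ of $\mathcal K=\mathbf s+V\subseteq\mathbb F^E$: matroid on $E$ with rank function $r(S)=\dim\operatorname{span}\{x_e|_V:e\in S\}$, $x_e$ coordinate functionals. Cobasis = complement of a basis; coindependent set = subset of a cobasis. Cullis' determinant: $\det_{n,k}(X)=\sum_{c}\operatorname{sgn}(c)\det(X[c|))$, sum over $k$-subsets $c=\{c(1)<\dots<c(k)\}$ of $[n]$, $X[c|)$ the submatrix of rows in $c$, $\operatorname{sgn}(c)=(-1)^{\sum_\alpha(c(\alpha)-\alpha)}$. *)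

From HB Require Import structures.
From mathcomp Require Import all_boot all_order all_algebra all_fingroup.
Set Implicit Arguments. Unset Strict Implicit. Unset Printing Implicit Defensive.
Import GRing.Theory.
Local Open Scope ring_scope.

Section Defs.
Variable F : fieldType.

Definition linvar_dir m p (K : 'M[F]_(m, p) -> Prop) (V : {vspace 'M[F]_(m, p)}) : Prop :=
  (exists s, K s) /\ forall s X, K s -> (K X <-> (X - s) \in V).

Definition is_linvar m p (K : 'M[F]_(m, p) -> Prop) : Prop :=
  exists V, linvar_dir K V.

Definition coord_restr m p (V : {vspace 'M[F]_(m, p)}) (e : 'I_m * 'I_p)
  : 'Hom(subvs_of V, F^o) :=
  linfun (fun v : subvs_of V => ((vsval v : 'M[F]_(m, p)) e.1 e.2 : F^o)).

(* rank function of the matroid M(K), K with direction V *)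
Definition mrank m p (V : {vspace 'M[F]_(m, p)}) (S : {set 'I_m * 'I_p}) : nat :=
  \dim (span [seq coord_restr V e | e <- enum S]).

Definition mindep m p (V : {vspace 'M[F]_(m, p)}) (S : {set 'I_m * 'I_p}) : Prop :=
  mrank V S = #|S|.

Definition mbasis m p (V : {vspace 'M[F]_(m, p)}) (S : {set 'I_m * 'I_p}) : Prop :=
  mindep V S /\ mrank V S = mrank V setT.

Definition mcobasis m p (V : {vspace 'M[F]_(m, p)}) (S : {set 'I_m * 'I_p}) : Prop :=
  mbasis V (~: S).

Definition mcoindep m p (V : {vspace 'M[F]_(m, p)}) (S : {set 'I_m * 'I_p}) : Prop :=
  exists C, mcobasis V C /\ S \subset C.

Definition minor_variety m p (K : 'M[F]_(m, p) -> Prop) (i' : 'I_m) (j' : 'I_p)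
  (c : 'I_m -> F) : 'M[F]_(m.-1, p.-1) -> Prop :=
  fun Y => exists X, [/\ K X, (forall i, X i j' = c i) & Y = row' i' (col' j' X)].

Definition iota_ij m p (i' : 'I_m) (j' : 'I_p) (e : 'I_m.-1 * 'I_p.-1) : 'I_m * 'I_p :=
  (lift i' e.1, lift j' e.2).

(* Cullis' determinant: k-subsets c of [m] are encoded as strictly increasing
   maps 'I_p -> 'I_m (c(1) < ... < c(p)); X[c|) = rowsub f X. *)
Definition cullis m p (X : 'M[F]_(m, p)) : F :=
  \sum_(f : {ffun 'I_p -> 'I_m} | [forall a : 'I_p, forall b : 'I_p, (a < b)%N ==> (f a < f b)%N])
     (-1) ^+ (\sum_(a : 'I_p) (f a - a))%N * \det (rowsub f X).

End Defs.

From HB Require Import structures.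
From mathcomp Require Import all_boot all_order all_algebra all_fingroup.
From mathcomp Require Import zify.
From Stdlib Require Import Classical.
Set Implicit Arguments. Unset Strict Implicit. Unset Printing Implicit Defensive.
Import GRing.Theory.
Local Open Scope ring_scope.

(* Let [B = ~: Bs] be the basis.  As column [j'] lies in [B], the coordinates of
   that column are independent on [V], so the column map [V -> F^n] is onto:
   [K] meets every prescribed column [c], and [K'] is the image of this slice
   under [X |-> X(i'|j')], with direction the image of
   [Vcol0 = {v in V | column j' of v is 0}], of dimension [dim V - n].
   A vector of [V] vanishing on [B] is zero.  Hence an element of [Vcol0] with
   zero minor is determined by its entries in row [i'] that lie in [B] off
   column [j'], which bounds the kernel of the minor map by
   [k - 1 - |Bs ∩ row i'|] and gives (b) by rank-nullity; the same argument
   shows that only [0] vanishes off [(Bs ∩ row i') ∪ iota(Bs')], i.e. the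
   complement of that set contains a basis, which is (c).  For (d), Laplace
   expansion of each term of the Cullis determinant along the unit column [j']
   gives [cullis X = ± cullis X(i'|j')]. *)

Lemma linfunE_linear (R : fieldType) (aT rT : vectType R) (f : aT -> rT) :
  linear f -> linfun f =1 f.
Proof.
move=> fL x; pose lf : {linear aT -> rT} := HB.pack f (GRing.isLinear.Build _ _ _ _ f fL).
exact: (lfunE lf x).
Qed.

Lemma linvar_dir_uniq (F : fieldType) m p (K : 'M[F]_(m, p) -> Prop) V1 V2 :
  linvar_dir K V1 -> linvar_dir K V2 -> V1 = V2.
Proof.
move=> [[s Ks] h1] [_ h2]; apply/vspaceP => x.
have := h1 s (x + s) Ks; have := h2 s (x + s) Ks; rewrite addrK => -[a b] [c d].
by apply/idP/idP => ?; [apply: a; apply: d | apply: c; apply: b].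
Qed.

Section CoordinateMatroid.
Variables (F : fieldType) (m p : nat) (V : {vspace 'M[F]_(m, p)}).

Local Notation coords es := [seq coord_restr V e | e <- es].

Lemma coord_restrE e w : coord_restr V e w = vsval w e.1 e.2.
Proof. by rewrite /coord_restr linfunE_linear // => a u v /=; rewrite !mxE. Qed.

Lemma coord_span_vanish es g (w : subvs_of V) : g \in <<coords es>>%VS ->
  (forall e, e \in es -> vsval w e.1 e.2 = 0) -> g w = 0.
Proof.
move=> /(@coord_span _ _ _ (in_tuple _)) -> w0.
rewrite sum_lfunE big1 // => i _; rewrite scale_lfunE.
have /mapP[e es_e ->] : (in_tuple (coords es))`_i \in coords es by exact: mem_nth.
by rewrite coord_restrE w0 // scaler0.
Qed.

Lemma annihilator_in_coord_span es (g : 'Hom(subvs_of V, F^o)) :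
  (forall w : subvs_of V, (forall e, e \in es -> vsval w e.1 e.2 = 0) -> g w = 0) ->
  g \in <<coords es>>%VS.
Proof.
move=> hg; set X := coords es; pose q := size X.
pose phi := fun w : subvs_of V => \row_(i < q) (X`_i w : F).
have phiL : linear phi by move=> a u v; apply/rowP => i; rewrite !mxE linearP.
pose Phi : 'Hom(subvs_of V, 'rV[F]_q) := linfun phi.
have PhiE w : Phi w = phi w by rewrite linfunE_linear.
(* [g] vanishes on [lker Phi], hence factors through [Phi] *)
pose h := (g \o Phi^-1 \o projv (limg Phi))%VF.
have hPhi w : h (Phi w) = g w.
  rewrite /h !comp_lfunE projv_id ?memv_img ?memvf //.
  set w' := (Phi^-1)%VF (Phi w).
  have Ew : Phi w' = Phi w by rewrite limg_lfunVK // memv_img ?memvf.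
  apply/eqP; rewrite -subr_eq0 -linearB /=; apply/eqP/hg => e es_e.
  have ie : (index (coord_restr V e) X < q)%N by rewrite index_mem map_f.
  have := congr1 (fun M : 'rV[F]_q => M 0 (Ordinal ie)) (congr1 (fun x => Phi w - x) Ew).
  rewrite subrr -linearB /= PhiE !mxE /= nth_index ?map_f // coord_restrE.
  by rewrite linearB /= !mxE => /eqP; rewrite subr_eq0 => /eqP ->; rewrite subrr.
have -> : g = \sum_(i < q) h (delta_mx 0 i) *: X`_i.
  apply/lfunP => w; rewrite sum_lfunE -hPhi {1}(row_sum_delta (Phi w)) linear_sum.
  apply: eq_bigr => i _; rewrite linearZ scale_lfunE PhiE !mxE /=.
  exact: mulrC.
by apply: rpred_sum => i _; apply/rpredZ/memv_span/mem_nth.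
Qed.

Lemma coords_sub_full (S : {set 'I_m * 'I_p}) :
  (<<coords (enum S)>> <= <<coords (enum [set: 'I_m * 'I_p])>>)%VS.
Proof. by apply: sub_span => _ /mapP[e _ ->]; apply: map_f; rewrite mem_enum inE. Qed.

Lemma mrank_full_vanish_eq0 (S : {set 'I_m * 'I_p}) v : mrank V S = mrank V setT -> v \in V ->
  (forall e, e \in S -> v e.1 e.2 = 0) -> v = 0.
Proof.
move=> full vV v0.
have eqS : <<coords (enum S)>>%VS = <<coords (enum setT)>>%VS.
  by apply/eqP; rewrite eqEdim coords_sub_full /=; move: full; rewrite /mrank => ->.
apply/matrixP => i j; rewrite mxE.
have := @coord_span_vanish (enum S) (coord_restr V (i, j)) (vsproj V v).
rewrite coord_restrE vsprojK //; apply; last by move=> e; rewrite mem_enum; apply: v0.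
by rewrite eqS; apply/memv_span/map_f; rewrite mem_enum inE.
Qed.

Lemma mcobasis_vanish_eq0 (B : {set 'I_m * 'I_p}) v : mcobasis V B -> v \in V ->
  (forall e, e \notin B -> v e.1 e.2 = 0) -> v = 0.
Proof.
move=> [_ full] vV v0; apply: (mrank_full_vanish_eq0 full vV) => e.
by rewrite inE; apply: v0.
Qed.

Lemma mindep_add (S : {set 'I_m * 'I_p}) t :
  mindep V S -> coord_restr V t \notin <<coords (enum S)>>%VS -> mindep V (t |: S).
Proof.
move=> indS tS.
have tnS : t \notin S by apply: contra tS => ?; apply/memv_span/map_f; rewrite mem_enum.
rewrite /mindep /mrank.
have -> : <<coords (enum (t |: S))>>%VS = <<coord_restr V t :: coords (enum S)>>%VS.
  apply: eq_span => x; rewrite inE; apply/mapP/orP.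
    case=> e; rewrite mem_enum in_setU1 => /orP[/eqP -> ->|eS ->]; first by left.
    by right; apply: map_f; rewrite mem_enum.
  case=> [/eqP ->|/mapP[e eS ->]]; first by exists t; rewrite // mem_enum setU11.
  by exists e; rewrite // mem_enum in_setU1 -mem_enum eS orbT.
have /eqP free_tS : free (coord_restr V t :: coords (enum S)).
  by rewrite free_cons tS /free /= -[\dim _]/(mrank V S) indS size_map cardE eqxx.
by rewrite free_tS /= size_map -cardE cardsU1 tnS.
Qed.

Lemma vanishing_set_sub_mbasis (T : {set 'I_m * 'I_p}) :
  (forall v, v \in V -> (forall t, t \in T -> v t.1 t.2 = 0) -> v = 0) ->
  exists2 B : {set 'I_m * 'I_p}, B \subset T & mbasis V B.
Proof.
move=> hT; pose P (B : {set 'I_m * 'I_p}) := (B \subset T) && (mrank V B == #|B|).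
have P0 : P set0.
  by rewrite /P sub0set /mrank enum_set0 /= span_nil dimv0 cards0.
have [B /maxsetP[/andP[BT /eqP indB] Bmax] _] := maxset_exists P0.
have B_spans t : t \in T -> coord_restr V t \in <<coords (enum B)>>%VS.
  move=> tT; apply/negPn/negP => tB.
  have PtB : P (t |: B) by rewrite /P subUset sub1set tT BT; apply/eqP/mindep_add.
  have E := Bmax _ PtB (subsetUr _ _).
  by move: tB; rewrite -E; apply/negP/negPn/memv_span/map_f; rewrite mem_enum setU11.
have B_sep v : v \in V -> (forall b, b \in B -> v b.1 b.2 = 0) -> v = 0.
  move=> vV v0; apply: hT => // t tT.
  have := @coord_span_vanish (enum B) (coord_restr V t) (vsproj V v) (B_spans t tT).
  by rewrite coord_restrE vsprojK //; apply=> e; rewrite mem_enum; apply: v0.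
have fullB : (<<coords (enum setT)>> <= <<coords (enum B)>>)%VS.
  apply/span_subvP => _ /mapP[e _ ->]; apply: annihilator_in_coord_span => w w0.
  rewrite coord_restrE (B_sep (vsval w)) ?subvsP ?mxE // => b bB.
  by apply: w0; rewrite mem_enum.
exists B => //; split => //; apply/eqP; rewrite eqn_leq.
by rewrite (dimvS (coords_sub_full B)) (dimvS fullB).
Qed.

Lemma mcoindep_of_vanish (S : {set 'I_m * 'I_p}) :
  (forall v, v \in V -> (forall e, e \notin S -> v e.1 e.2 = 0) -> v = 0) -> mcoindep V S.
Proof.
move=> hS; have [|B BS hB] := vanishing_set_sub_mbasis (T := ~: S).
  by move=> v vV v0; apply: hS => // e eS; apply: v0; rewrite inE.
by exists (~: B); rewrite /mcobasis setCK subsetC.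
Qed.

Lemma mindep_unit_vector (B : {set 'I_m * 'I_p}) e0 : mindep V B -> e0 \in B ->
  exists2 u, u \in V & u e0.1 e0.2 = 1 /\ forall e, e \in B -> e != e0 -> u e.1 e.2 = 0.
Proof.
move=> indB e0B; set es := enum (B :\ e0).
have e0_free : coord_restr V e0 \notin <<coords es>>%VS.
  apply/negP => e0_in.
  have : (<<coords (enum B)>> <= <<coords es>>)%VS.
    apply/span_subvP => _ /mapP[e eB ->].
    have [-> //|ne] := eqVneq e e0.
    by apply/memv_span/map_f; rewrite mem_enum in_setD1 ne -mem_enum.
  move/dimvS; rewrite -[\dim _]/(mrank V B) indB => /leq_trans/(_ (dim_span _)).
  by rewrite size_map -cardE (cardsD1 e0 B) e0B ltnn.
have [w [w0 nz]] : exists w : subvs_of V,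
    (forall e, e \in es -> vsval w e.1 e.2 = 0) /\ coord_restr V e0 w != 0.
  apply: NNPP => none; apply/negP: e0_free; rewrite negbK.
  apply: annihilator_in_coord_span => w w0; apply/eqP/negPn/negP => nz.
  by apply: none; exists w.
rewrite coord_restrE in nz.
exists ((vsval w e0.1 e0.2)^-1 *: vsval w); first by rewrite memvZ ?subvsP.
split=> [|e eB ne]; first by rewrite mxE mulVf.
by rewrite mxE (w0 e) ?mulr0 // mem_enum in_setD1 ne.
Qed.

End CoordinateMatroid.

Lemma iota_ij_inj m p (i' : 'I_m) (j' : 'I_p) : injective (iota_ij i' j').
Proof.
move=> [a b] [a' b'] /pair_equal_spec[/= /lift_inj ea /lift_inj eb].
by rewrite ea eb.
Qed.

Section MinorVariety.
Variables (F : fieldType) (n k : nat) (K : 'M[F]_(n, k) -> Prop).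
Variables (V : {vspace 'M[F]_(n, k)}) (Bs : {set 'I_n * 'I_k}).
Variables (i' : 'I_n) (j' : 'I_k) (c : 'I_n -> F).
Hypothesis hKV : linvar_dir K V.
Hypothesis hB : mcobasis V Bs.
Hypothesis hj' : forall i : 'I_n, (i, j') \notin Bs.

Definition col_lfun : 'Hom('M[F]_(n, k), 'rV[F]_n) :=
  linfun (fun X : 'M[F]_(n, k) => \row_i X i j').

Lemma col_lfunE X : col_lfun X = \row_i X i j'.
Proof. by rewrite linfunE_linear // => a Y Z; apply/rowP => i; rewrite !mxE. Qed.

Definition minor_lfun : 'Hom('M[F]_(n, k), 'M[F]_(n.-1, k.-1)) :=
  linfun (fun X : 'M[F]_(n, k) => row' i' (col' j' X)).

Lemma minor_lfunE X : minor_lfun X = row' i' (col' j' X).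
Proof. by rewrite linfunE_linear // => a Y Z; apply/matrixP => i j; rewrite !mxE. Qed.

Definition Vcol0 := (V :&: lker col_lfun)%VS.
Definition Vminor := (minor_lfun @: Vcol0)%VS.

(* The column [j'] lies in the basis [~: Bs], so its coordinates are free on [V]. *)
Lemma col_lfun_onto : (col_lfun @: V)%VS = fullv.
Proof.
apply/eqP; rewrite eqEsubv subvf /=; apply/subvP => y _.
rewrite (row_sum_delta y); apply: rpred_sum => i _; apply: rpredZ.
have iB : (i, j') \in ~: Bs by rewrite inE hj'.
have [u uV [u1 u0]] := mindep_unit_vector hB.1 iB.
apply/memv_imgP; exists u => //; rewrite col_lfunE; apply/rowP => i2; rewrite !mxE.
have [-> //|ne] := eqVneq i2 i.
by rewrite (u0 (i2, j')) ?inE ?hj' // xpair_eqE negb_and ne.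
Qed.

Lemma dim_Vcol0 : (\dim Vcol0 + n)%N = \dim V.
Proof.
by rewrite -(limg_ker_dim col_lfun V) col_lfun_onto dimvf /= dim_matrix mul1r.
Qed.

Lemma linvar_dir_minor : linvar_dir (minor_variety K i' j' c) Vminor.
Proof.
have [[s Ks] hK] := hKV.
have [X0 KX0 cX0] : exists2 X0, K X0 & forall i, X0 i j' = c i.
  have /memv_imgP[u uV u_c] : \row_i (c i - s i j') \in (col_lfun @: V)%VS.
    by rewrite col_lfun_onto memvf.
  exists (s + u); first by apply/(hK s _ Ks); rewrite addrC addKr.
  move=> i; have := congr1 (fun r : 'rV[F]_n => r 0 i) u_c.
  by rewrite col_lfunE !mxE => <-; rewrite addrC subrK.
split; first by exists (row' i' (col' j' X0)), X0.
move=> _ Y [X1 [KX1 cX1 ->]]; split.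
  move=> [X [KX cX ->]]; apply/memv_imgP; exists (X - X1).
    rewrite /Vcol0 memv_cap memv_ker col_lfunE; apply/andP; split; first exact/(hK X1 _ KX1).
    by apply/eqP/rowP => i; rewrite !mxE cX cX1 subrr.
  by rewrite minor_lfunE; apply/matrixP => i j; rewrite !mxE.
case/memv_imgP => v; rewrite /Vcol0 memv_cap memv_ker col_lfunE => /andP[vV /eqP/rowP v0] Ev.
exists (X1 + v); split.
- by apply/(hK X1 _ KX1); rewrite addrC addKr.
- by move=> i; have := v0 i; rewrite !mxE cX1 => ->; rewrite addr0.
- apply/matrixP => i j; move/matrixP/(_ i j): Ev.
  by rewrite minor_lfunE !mxE => <-; rewrite addrC subrK.
Qed.

Lemma minor_vanish_eq0 v : v \in V -> (forall i, v i j' = 0) -> minor_lfun v = 0 ->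
  (forall j, (i', j) \notin Bs -> v i' j = 0) -> v = 0.
Proof.
move=> vV col0 minor0 row0; apply: (mcobasis_vanish_eq0 hB vV) => -[a b] /= abB.
have [<- //|bj] := eqVneq j' b.
have [ai|ai] := eqVneq i' a; first by rewrite -ai; apply: row0; rewrite ai.
have [[a' -> _] [b' -> _]] := (unlift_some ai, unlift_some bj).
by move/matrixP: minor0 => /(_ a' b'); rewrite minor_lfunE !mxE.
Qed.

Local Notation Brow := [set e in Bs | e.1 == i'].
Local Notation Drow := [set e in ~: Bs | (e.1 == i') && (e.2 != j')].

Lemma card_row_split : (#|Drow| + #|Brow|).+1 = k.
Proof.
pose R := setX [set i'] [set: 'I_k].
suff -> : (#|Drow| + #|Brow|).+1 = #|R| by rewrite cardsX cards1 cardsT card_ord mul1n.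
rewrite -(cardsID Bs R).
have -> : R :&: Bs = Brow by apply/setP => -[a b]; rewrite !inE andbT andbC.
have -> : R :\: Bs = (i', j') |: Drow.
  apply/setP => -[a b]; rewrite !inE /= xpair_eqE.
  by case: eqP => [->|_]; case: eqP => [->|_]; rewrite /= ?hj' ?andbT ?andbF.
by rewrite cardsU1 !inE /= !eqxx /= andbF add1n addnS addnC.
Qed.

Lemma dim_Vcol0_minor_ker : (\dim (Vcol0 :&: lker minor_lfun) <= #|Drow|)%N.
Proof.
set W := (Vcol0 :&: lker minor_lfun)%VS.
pose restr (X : 'M[F]_(n, k)) : 'rV[F]_#|Drow| := \row_t X (enum_val t).1 (enum_val t).2.
have restrL : linear restr by move=> a X Y; apply/rowP => t; rewrite !mxE.
pose rho : 'Hom('M[F]_(n, k), 'rV[F]_#|Drow|) := linfun restr.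
have W_rho0 : (W :&: lker rho)%VS = 0%VS.
  apply/eqP; rewrite -subv0; apply/subvP => v.
  rewrite !memv_cap !memv_ker col_lfunE => /andP[/andP[/andP[vV /eqP/rowP col0] minor0] rho0].
  have col0' i : v i j' = 0 by have := col0 i; rewrite !mxE.
  rewrite memv0; apply/eqP/(minor_vanish_eq0 vV col0' (eqP minor0)) => j ijB.
  have [->|jj] := eqVneq j j'; first exact: col0'.
  have ijD : (i', j) \in Drow by rewrite !inE ijB eqxx jj.
  move/eqP/rowP: rho0 => /(_ (enum_rank_in ijD (i', j))).
  by rewrite linfunE_linear // !mxE enum_rankK_in.
rewrite -(limg_ker_dim rho W) W_rho0 dimv0 add0n.
by apply: leq_trans (dimvS (subvf _)) _; rewrite dimvf /= dim_matrix mul1r.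
Qed.

Lemma codim_minor_le V' : linvar_dir (minor_variety K i' j' c) V' ->
  (n.-1 * k.-1 - \dim V' + #|Brow| <= n * k - \dim V)%N.
Proof.
move=> /(linvar_dir_uniq linvar_dir_minor) <-.
have rank_nullity : (\dim (Vcol0 :&: lker minor_lfun) + \dim Vminor = \dim Vcol0)%N :=
  limg_ker_dim _ _.
have dimVminor : (\dim Vminor <= n.-1 * k.-1)%N.
  by apply: leq_trans (dimvS (subvf _)) _; rewrite dimvf /= dim_matrix.
have nk : (n * k = n.-1 * k.-1 + n + k.-1)%N.
  have n0 := leq_ltn_trans (leq0n _) (ltn_ord i').
  have k0 := leq_ltn_trans (leq0n _) (ltn_ord j').
  by rewrite -[in LHS](prednK n0) -[in LHS](prednK k0) mulSn mulnS; lia.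
rewrite {}nk; move: dimVminor rank_nullity dim_Vcol0_minor_ker card_row_split dim_Vcol0.
move: (n.-1 * k.-1)%N (\dim (Vcol0 :&: _)) (\dim Vminor) (\dim Vcol0) (\dim V) #|Drow| #|Brow|.
by move=> *; lia.
Qed.

Lemma minor_cobasis_coindep V' Bs' :
  linvar_dir (minor_variety K i' j' c) V' -> mcobasis V' Bs' ->
  mcoindep V (Brow :|: [set iota_ij i' j' e | e in Bs']).
Proof.
move=> /(linvar_dir_uniq linvar_dir_minor) <- hB'.
apply: mcoindep_of_vanish => v vV v0.
have col0 i : v i j' = 0.
  apply: (v0 (i, j')); rewrite !inE negb_or (negbTE (hj' i)) /=.
  by apply/imsetP => -[e _ [_ /eqP]]; rewrite (negbTE (neq_lift _ _)).
have v_Vcol0 : v \in Vcol0.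
  by rewrite memv_cap vV memv_ker col_lfunE; apply/eqP/rowP => i; rewrite !mxE col0.
have minor0 : minor_lfun v = 0.
  apply: (mcobasis_vanish_eq0 hB' (memv_img minor_lfun v_Vcol0)) => e eB'.
  rewrite minor_lfunE !mxE; apply: (v0 (iota_ij i' j' e)).
  rewrite !inE negb_or (mem_imset _ _ (@iota_ij_inj _ _ i' j')) eB' /=.
  by rewrite eq_sym (negbTE (neq_lift _ _)) andbF.
apply: (minor_vanish_eq0 vV col0 minor0) => j ijB; apply: (v0 (i', j)).
rewrite !inE negb_or (negbTE ijB) /=.
by apply/imsetP => -[e _ [/eqP]]; rewrite (negbTE (neq_lift _ _)).
Qed.

End MinorVariety.

Lemma ltn_lift2 n (h : 'I_n) (x y : 'I_n.-1) : (lift h x < lift h y)%N = (x < y)%N.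
Proof. by rewrite /= /bump; case: (leqP h x); case: (leqP h y) => /=; lia. Qed.

Lemma lift_ltn_pivot n (h : 'I_n) (x : 'I_n.-1) : (lift h x < h)%N = (x < h)%N.
Proof. by rewrite /= /bump; case: (leqP h x) => /=; lia. Qed.

Lemma pivot_ltn_lift n (h : 'I_n) (x : 'I_n.-1) : (h < lift h x)%N = (h <= x)%N.
Proof. by rewrite /= /bump; case: (leqP h x) => /=; lia. Qed.

Lemma card_ord_ltn N t : (t <= N)%N -> #|[set b : 'I_N | (b < t)%N]| = t.
Proof.
move=> tN; have -> : [set b : 'I_N | (b < t)%N] = [set widen_ord tN b | b : 'I_t].
  apply/setP => b; rewrite inE; apply/idP/imsetP => [bt|[b' _ ->]]; last by rewrite /= ltn_ord.
  by exists (Ordinal bt) => //; apply: val_inj.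
rewrite card_imset ?card_ord //.
by move=> x y /(congr1 val) /= /val_inj.
Qed.

Lemma down_closed_card N (P : pred 'I_N) :
  (forall x y : 'I_N, (x < y)%N -> P y -> P x) ->
  forall b : 'I_N, P b = (b < #|[set x | P x]|)%N.
Proof.
move=> downP b; case Pb: (P b).
  have sub : [set x : 'I_N | (x < b.+1)%N] \subset [set x | P x].
    apply/subsetP => x; rewrite !inE ltnS leq_eqVlt => /orP[/eqP/val_inj -> //|xb].
    exact: downP xb Pb.
  by have := subset_leq_card sub; rewrite card_ord_ltn.
have sub : [set x | P x] \subset [set x : 'I_N | (x < b)%N].
  apply/subsetP => x; rewrite !inE => Px; rewrite ltnNge; apply: contraFN Pb.
  rewrite leq_eqVlt => /orP[/eqP/val_inj -> //|bx]; exact: downP bx Px.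
have := subset_leq_card sub; rewrite card_ord_ltn ?(ltnW (ltn_ord b)) //.
by rewrite ltnNge => ->.
Qed.

(* Convertible to the index predicate of the sum defining [cullis]. *)
Definition strict_incr a b (f : {ffun 'I_a -> 'I_b}) :=
  [forall x : 'I_a, forall y : 'I_a, (x < y)%N ==> (f x < f y)%N].

Section StrictlyIncreasing.
Variables (a b : nat) (f : {ffun 'I_a -> 'I_b}).

Lemma strict_incrP : reflect (forall x y : 'I_a, (x < y)%N -> (f x < f y)%N) (strict_incr f).
Proof.
apply: (iffP forallP) => [incr x y | incr x]; first by move/forallP/(_ y)/implyP: (incr x).
by apply/forallP => y; apply/implyP/incr.
Qed.

Hypothesis incr_f : strict_incr f.

Lemma strict_incr_ltn x y : (f x < f y)%N = (x < y)%N.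
Proof.
apply/idP/idP => [fxy|]; last exact: strict_incrP.
rewrite ltnNge leq_eqVlt; apply/negP => /orP[/eqP/val_inj yx|yx].
  by move: fxy; rewrite yx ltnn.
by have := strict_incrP incr_f _ _ yx; rewrite ltnNge (ltnW fxy).
Qed.

Lemma strict_incr_inj : injective f.
Proof.
move=> x y fxy; apply/val_inj/eqP; rewrite eqn_leq.
by apply/andP; split; rewrite leqNgt -strict_incr_ltn fxy ltnn.
Qed.

Lemma strict_incr_geq (x : 'I_a) : (x <= f x)%N.
Proof.
suff: forall t (x : 'I_a), (x : nat) = t -> (t <= f x)%N by apply.
elim=> [//|t IH] y yt.
have ta : (t < a)%N by rewrite -yt ltnW.
apply: leq_ltn_trans (IH (Ordinal ta) erefl) _.
by apply: (strict_incrP incr_f); rewrite /= yt.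
Qed.

End StrictlyIncreasing.

Section CullisUnitColumn.
Variables (F : fieldType) (m q : nat) (i0 : 'I_m.+2).

Implicit Types (g : {ffun 'I_q.+1 -> 'I_m.+1}) (f : {ffun 'I_q.+2 -> 'I_m.+2}).

Definition ins_pos g : 'I_q.+2 := inord #|[set b | (g b < i0)%N]|.

Lemma ins_posE g : (ins_pos g : nat) = #|[set b | (g b < i0)%N]|.
Proof. by rewrite inordK // ltnS; apply: leq_trans (max_card _) _; rewrite card_ord. Qed.

Lemma ltn_ins_pos g : strict_incr g -> forall b, (g b < i0)%N = (b < ins_pos g)%N.
Proof.
move=> incr_g b; rewrite ins_posE.
apply: (@down_closed_card _ (fun b => (g b < i0)%N)) => x y xy gy.
by apply: ltn_trans gy; rewrite strict_incr_ltn.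
Qed.

Definition insert_row g : {ffun 'I_q.+2 -> 'I_m.+2} :=
  [ffun a => if unlift (ins_pos g) a is Some b then lift i0 (g b) else i0].

Lemma insert_row_lift g b : insert_row g (lift (ins_pos g) b) = lift i0 (g b).
Proof. by rewrite ffunE liftK. Qed.

Lemma insert_row_pos g : insert_row g (ins_pos g) = i0.
Proof. by rewrite ffunE unlift_none. Qed.

Lemma insert_row_eq_pivot g a : (insert_row g a == i0) = (a == ins_pos g).
Proof.
case: (unliftP (ins_pos g) a) => [b ->|->]; last by rewrite insert_row_pos !eqxx.
rewrite insert_row_lift eq_sym (negbTE (neq_lift _ _)).
by apply/esym/negbTE; rewrite eq_sym neq_lift.
Qed.

Lemma insert_row_incr g : strict_incr g -> strict_incr (insert_row g).
Proof.
move=> incr_g; apply/strict_incrP => x y.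
case: (unliftP (ins_pos g) x) => [bx ->|->]; case: (unliftP (ins_pos g) y) => [by_ ->|->];
  rewrite ?insert_row_lift ?insert_row_pos ?ltnn //.
- by rewrite !ltn_lift2 strict_incr_ltn.
- by rewrite !lift_ltn_pivot ltn_ins_pos.
- by rewrite !pivot_ltn_lift leqNgt (leqNgt i0) ltn_ins_pos.
Qed.

Definition hit_pos f : 'I_q.+2 := odflt ord0 [pick a | f a == i0].

Definition remove_row f : {ffun 'I_q.+1 -> 'I_m.+1} :=
  [ffun b => odflt ord0 (unlift i0 (f (lift (hit_pos f) b)))].

Lemma hit_posE f a : strict_incr f -> f a = i0 -> hit_pos f = a.
Proof.
rewrite /hit_pos; case: pickP => [a' /eqP fa' | none] /= incr_f fa.
  by apply: (strict_incr_inj incr_f); rewrite fa fa'.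
by move: (none a); rewrite fa eqxx.
Qed.

Lemma insert_rowK g : strict_incr g -> remove_row (insert_row g) = g.
Proof.
move=> incr_g; have pos_ins : hit_pos (insert_row g) = ins_pos g.
  exact: hit_posE (insert_row_incr incr_g) (insert_row_pos g).
by apply/ffunP => b; rewrite ffunE pos_ins insert_row_lift liftK.
Qed.

Section HittingPivot.
Variable f : {ffun 'I_q.+2 -> 'I_m.+2}.
Hypotheses (incr_f : strict_incr f) (f_hit : f (hit_pos f) = i0).

Lemma remove_rowE b : lift i0 (remove_row f b) = f (lift (hit_pos f) b).
Proof.
have ne : i0 != f (lift (hit_pos f) b).
  rewrite -f_hit; apply/eqP => /(strict_incr_inj incr_f) hitE.
  by move: (neq_lift (hit_pos f) b); rewrite -hitE eqxx.
by have [j fE E] := unlift_some ne; rewrite ffunE E fE.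
Qed.

Lemma remove_row_incr : strict_incr (remove_row f).
Proof.
apply/strict_incrP => x y xy.
by rewrite -(ltn_lift2 i0) !remove_rowE strict_incr_ltn // ltn_lift2.
Qed.

Lemma remove_rowK : insert_row (remove_row f) = f.
Proof.
have pos_rem : ins_pos (remove_row f) = hit_pos f.
  apply: ord_inj; rewrite ins_posE.
  have -> : [set b | (remove_row f b < i0)%N] = [set b : 'I_q.+1 | (b < hit_pos f)%N].
    apply/setP => b; rewrite !inE -(lift_ltn_pivot i0) remove_rowE.
    by rewrite -f_hit strict_incr_ltn // lift_ltn_pivot.
  by rewrite card_ord_ltn // -ltnS ltn_ord.
apply/ffunP => a; rewrite ffunE pos_rem.
by case: (unliftP (hit_pos f) a) => [b ->|->]; rewrite ?remove_rowE.
Qed.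

End HittingPivot.

Lemma sum_insert_row_shift g : strict_incr g ->
  (\sum_(a < q.+2) (insert_row g a - a) + ins_pos g = i0 + \sum_(b < q.+1) (g b - b))%N.
Proof.
move=> incr_g; rewrite (bigD1_ord (ins_pos g)) //= insert_row_pos.
have -> : (\sum_(b < q.+1) (insert_row g (lift (ins_pos g) b) - lift (ins_pos g) b) =
           \sum_(b < q.+1) (g b - b))%N.
  apply: eq_bigr => b _; rewrite insert_row_lift /= /bump.
  by have := ltn_ins_pos incr_g b; case: (leqP i0 (g b)); case: (leqP (ins_pos g) b) => /=; lia.
have := strict_incr_geq (insert_row_incr incr_g) (ins_pos g); rewrite insert_row_pos.
by move: (\sum_(b < q.+1) _)%N => S; lia.
Qed.

Variables (X : 'M[F]_(m.+2, q.+2)) (j0 : 'I_q.+2).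
Hypothesis X_unit_col : forall i, X i j0 = (i == i0)%:R.

Lemma det_rowsub_miss_pivot f : (forall a, f a != i0) -> \det (rowsub f X) = 0.
Proof.
move=> miss; rewrite (expand_det_col _ j0) big1 // => a _.
by rewrite !mxE X_unit_col (negbTE (miss a)) mul0r.
Qed.

Lemma det_rowsub_insert_row g : \det (rowsub (insert_row g) X) =
  (-1) ^+ (ins_pos g + j0) * \det (rowsub g (row' i0 (col' j0 X))).
Proof.
rewrite (expand_det_col _ j0) (bigD1 (ins_pos g)) //= big1 ?addr0.
  rewrite !mxE insert_row_pos X_unit_col eqxx mul1r /cofactor; congr (_ * \det _).
  by apply/matrixP => b c; rewrite !mxE insert_row_lift.
by move=> a na; rewrite !mxE X_unit_col insert_row_eq_pivot (negbTE na) mul0r.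
Qed.

(* The terms of [cullis X] whose rows avoid [i0] vanish; the others are in
   bijection with the terms of the minor via [insert_row]/[remove_row]. *)
Lemma cullis_unit_col : cullis X = (-1) ^+ (i0 + j0) * cullis (row' i0 (col' j0 X)).
Proof.
rewrite /cullis (bigID (fun f : {ffun 'I_q.+2 -> 'I_m.+2} => [exists a, f a == i0])) /=.
rewrite [X in _ + X]big1 ?addr0; last first.
  by move=> f /andP[_ /existsPn miss]; rewrite det_rowsub_miss_pivot ?mulr0.
rewrite (reindex_onto insert_row remove_row) /=; last first.
  move=> f /andP[incr_f /existsP[a /eqP fa]].
  by apply: remove_rowK; rewrite ?(hit_posE incr_f fa).
rewrite mulr_sumr; apply: eq_big => g.
  apply/idP/idP => [/andP[/andP[incr_f /existsP[a /eqP fa]] /eqP <-]|incr_g].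
    by apply: remove_row_incr; rewrite ?(hit_posE incr_f fa).
  rewrite insert_rowK // eqxx andbT; apply/andP; split; first exact: insert_row_incr.
  by apply/existsP; exists (ins_pos g); rewrite insert_row_pos.
move=> /andP[/andP[incr_f _] /eqP E].
have incr_g : strict_incr g.
  rewrite -E; apply: remove_row_incr => //.
  by rewrite (hit_posE incr_f (insert_row_pos g)) insert_row_pos.
rewrite det_rowsub_insert_row mulrA -exprD mulrA -exprD; congr (_ ^+ _ * _).
have := sum_insert_row_shift incr_g.
move: (\sum_(a < q.+2) _)%N (\sum_(b < q.+1) (g b - b))%N (ins_pos g : nat) => A B C.
by move: (i0 : nat) (j0 : nat) => *; lia.
Qed.

End CullisUnitColumn.

Lemma cullis_minor_eq0 (F : fieldType) n k (X : 'M[F]_(n, k)) (i0 : 'I_n) (j0 : 'I_k) :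
  (1 < k)%N -> (k <= n)%N -> (forall i, X i j0 = (i == i0)%:R) ->
  cullis X = 0 -> cullis (row' i0 (col' j0 X)) = 0.
Proof.
case: n X i0 => [|[|m]] X i0; case: k X j0 => [|[|q]] X j0 // _ _ X_unit_col.
by rewrite (cullis_unit_col X_unit_col) => /eqP; rewrite mulf_eq0 signr_eq0 => /eqP.
Qed.

Theorem mainTheorem6 (F : fieldType) (n k : nat) (hk : (1 < k)%N) (hnk : (k <= n)%N)
  (K : 'M[F]_(n, k) -> Prop) (V : {vspace 'M[F]_(n, k)}) (hKV : linvar_dir K V)
  (Bs : {set 'I_n * 'I_k}) (hB : mcobasis V Bs)
  (j' : 'I_k) (hj' : forall i : 'I_n, (i, j') \notin Bs)
  (i' : 'I_n) (c : 'I_n -> F) :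
  let K' := minor_variety K i' j' c in
  let Brow := [set e in Bs | e.1 == i'] in
  [/\ is_linvar K',
      (forall V' : {vspace 'M[F]_(n.-1, k.-1)}, linvar_dir K' V' ->
         (n.-1 * k.-1 - \dim V' + #|Brow| <= n * k - \dim V)%N),
      (forall (V' : {vspace 'M[F]_(n.-1, k.-1)}) (Bs' : {set 'I_n.-1 * 'I_k.-1}),
         linvar_dir K' V' -> mcobasis V' Bs' ->
         mcoindep V (Brow :|: [set iota_ij i' j' e | e in Bs']))
    & ((forall X, K X -> cullis X = 0) ->
       (forall i, c i = (i == i')%:R) ->
       forall Y, K' Y -> cullis Y = 0)].
Proof.
move=> K' Brow; split.
- by exists (Vminor V i' j'); apply: linvar_dir_minor hB hj'.
- exact: codim_minor_le hKV hB hj'.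
- exact: minor_cobasis_coindep hKV hB hj'.
- move=> cullis0 c_unit _ [X [KX cX ->]].
  by apply: cullis_minor_eq0 hk hnk _ (cullis0 X KX) => i; rewrite cX c_unit.
Qed.
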